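(* Let $n,x$ be integers with $1<x<n$, so that $G=C_{2n}(x,1,n)$ is a $5$-regular circulant graph. If $\tfrac{n}{2}<x\leq \tfrac{2n}{3}$, then $G$ is word-representable and $R(G)\leq 5$.
   Context: Two distinct letters $x,y$ alternate in a word $w$ if, after deleting all other letters from $w$, the resulting word is of the form $xyxy\cdots$ or $yxyx\cdots$ (of even or odd length). A graph $G=(V,E)$ is word-representable if there is a word $w$ over the alphabet $V$, containing every letter of $V$ at least once, such that for all distinct $x,y\in V$, $xy\in E$ if and only if $x$ and $y$ alternate in $w$. A word is $k$-uniform if every letter occurs in it exactly $k$ times; $G$ is $k$-representable if some $k$-uniform word represents it, and the representation number $R(G)$ of a word-representable graph $G$ is the least such $k$. For an integer $m$ and a set $R$ of positive integers each at most $m/2$, the circulant graph $C_m(R)$ has vertex set $\{0,1,\dots,m-1\}$, with $i$ and $j$ adjacent iff $\min(|i-j|,\,m-|i-j|)\in R$. $C_{2n}(x,1,n)$ denotes the circulant graph on $2n$ vertices with jump set $\{1,x,n\}$; it is $5$-regular exactly when $1<x<n$. *)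

From mathcomp Require Import all_boot.
Set Implicit Arguments. Unset Strict Implicit. Unset Printing Implicit Defensive.

Definition alternate (T : eqType) (w : seq T) (x y : T) : bool :=
  let s := [seq z <- w | (z == x) || (z == y)] in
  all (fun p => p.1 != p.2) (zip s (behead s)).

Definition represents (V : finType) (adj : rel V) (w : seq V) : Prop :=
  (forall v : V, v \in w) /\
  (forall x y : V, x != y -> (adj x y <-> alternate w x y)).

Definition word_representable (V : finType) (adj : rel V) : Prop :=
  exists w : seq V, represents adj w.

Definition k_uniform (V : finType) (k : nat) (w : seq V) : bool :=
  [forall v : V, count_mem v w == k].

Definition k_representable (V : finType) (adj : rel V) (k : nat) : Prop :=
  exists w : seq V, k_uniform k w /\ represents adj w.

Definition circ_dist (m : nat) (i j : 'I_m) : nat :=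
  let d := if i <= j then j - i else i - j in minn d (m - d).

Definition circulant (m : nat) (R : pred nat) : rel 'I_m :=
  fun i j => (i != j) && (circ_dist i j \in R).

Definition C2n_x1n (n x : nat) : rel 'I_(2 * n) :=
  circulant (fun d : nat => [|| d == 1, d == x | d == n]).
Arguments C2n_x1n : clear implicits.

(* Let w be the 5-uniform word whose b-th block (b = 0, ..., 2n-1) is
   b, b-1, b-x, b+n, b+x (mod 2n).  Adding c to every letter rotates w by c
   blocks, and a rotation does not change whether two letters occurring equally
   often alternate; so whether u and v alternate depends only on d = v - u
   (mod 2n), and d and -d behave alike.  For d = 1, x, n the ten occurrences of
   0 and d interleave; checking this order is where n/2 < x <= 2n/3 is used.
   For any other d, the occurrence of 0 opening block 0 and the one in the
   second slot of block 1 enclose only the letters -1, -x, n, x, 1, so 0 and d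
   do not alternate.  These are exactly the edges of C_2n(x,1,n). *)

From mathcomp Require Import all_boot zify.
Set Implicit Arguments. Unset Strict Implicit. Unset Printing Implicit Defensive.

Lemma filter_rot (T : Type) (P : pred T) k (s : seq T) :
  filter P (rot k s) = rot (size (filter P (take k s))) (filter P s).
Proof. by rewrite -{3}(cat_take_drop k s) filter_cat rot_size_cat /rot filter_cat. Qed.

Lemma modn_wrap a v m : v < m -> a = v \/ a = v + m -> a %% m = v.
Proof. by move=> lt_vm [->|->]; rewrite ?modnDr modn_small. Qed.

Lemma modn_diff i j m :
  i < m -> j < m -> (j + (m - i)) %% m = if i <= j then j - i else j + m - i.
Proof. by move=> lt_i lt_j; case: (leqP i j) => le_ij; apply: modn_wrap; lia. Qed.

Section Alternation.

Variable T : eqType.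
Implicit Types (a b x y : T) (s t : seq T).

Definition neq_rel : rel T := fun u v => u != v.

Lemma alternateE s a b :
  alternate s a b = sorted neq_rel [seq z <- s | (z == a) || (z == b)].
Proof.
rewrite /alternate; case: [seq z <- s | _] => // z t.
by elim: t z => // y t IHt z /=; rewrite IHt.
Qed.

Lemma alternateC s a b : alternate s a b = alternate s b a.
Proof. by rewrite !alternateE; congr sorted; apply: eq_filter => z; rewrite orbC. Qed.

Lemma count_alternating x y t :
  x != y -> path neq_rel x t -> all (fun z => (z == x) || (z == y)) t ->
  count_mem x (x :: t) = count_mem y (x :: t) + (last x t == x).
Proof.
elim: t x y => [|z t IHt] x y neq_xy /=; first by rewrite eqxx (negbTE neq_xy).
move=> /andP[neq_xz path_zt] /andP[z_xy all_t].
have {z_xy} z_y : z = y.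
  by case/orP: z_xy => /eqP // z_x; rewrite z_x /neq_rel eqxx in neq_xz.
subst z; clear neq_xz.
have all_t' : all (fun z => (z == y) || (z == x)) t.
  by apply: sub_all all_t => u; rewrite orbC.
have neq_yx : y != x by rewrite eq_sym.
have /= := IHt y x neq_yx path_zt all_t'.
rewrite !eqxx (negbTE neq_xy) (negbTE neq_yx).
have : (last y t == y) || (last y t == x).
  by move: (mem_last y t); rewrite inE => /orP[->//|/(allP all_t)/orP[]->]; rewrite ?orbT.
by case/orP=> /eqP ->; rewrite eqxx ?(negbTE neq_xy) ?(negbTE neq_yx); lia.
Qed.

Lemma sorted_neq_cycle a b t :
  a != b -> all (fun z => (z == a) || (z == b)) t ->
  count_mem a t = count_mem b t -> sorted neq_rel t -> cycle neq_rel t.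
Proof.
have cycle_of x y u : x != y -> all (fun z => (z == x) || (z == y)) u ->
    count_mem x (x :: u) = count_mem y (x :: u) -> path neq_rel x u ->
    cycle neq_rel (x :: u).
  move=> neq_xy all_u count_xy path_u; rewrite /= rcons_path path_u /neq_rel.
  move: (count_alternating neq_xy path_u all_u); rewrite count_xy.
  by case: (last x u == x) => //=; lia.
move=> neq_ab; case: t => // z t /= /andP[z_ab all_t] count_ab path_t.
case/orP: z_ab => /eqP z_eq; rewrite z_eq in count_ab path_t *.
  exact: cycle_of neq_ab all_t count_ab path_t.
apply: (cycle_of _ a) => //; first by rewrite eq_sym.
by apply: sub_all all_t => u; rewrite orbC.
Qed.

Lemma alternate_rot s a b k :
  a != b -> count_mem a s = count_mem b s ->
  alternate (rot k s) a b = alternate s a b.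
Proof.
move=> neq_ab count_ab; rewrite !alternateE filter_rot.
have cycle_sorted (u : seq T) : cycle neq_rel u -> sorted neq_rel u.
  by case: u => // z u; rewrite /= rcons_path => /andP[].
set t := filter _ s; set j := size _.
have all_t : all (fun z => (z == a) || (z == b)) t.
  by apply/allP => z; rewrite mem_filter => /andP[].
have count_t : count_mem a t = count_mem b t.
  suff count_in c : (c == a) || (c == b) -> count_mem c t = count_mem c s.
    by rewrite !count_in ?eqxx ?orbT.
  by move=> c_ab; rewrite count_filter; apply: eq_count => z /=; case: eqP => // ->.
have rot_t : perm_eq (rot j t) t by rewrite perm_rot.
have all_rt : all (fun z => (z == a) || (z == b)) (rot j t) by rewrite (perm_all _ rot_t).
have count_rt : count_mem a (rot j t) = count_mem b (rot j t) by rewrite !(permP rot_t).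
apply/idP/idP => sorted_t; apply: cycle_sorted.
  by rewrite -(rot_cycle j) (sorted_neq_cycle neq_ab all_rt count_rt).
by rewrite rot_cycle (sorted_neq_cycle neq_ab all_t count_t).
Qed.

Lemma not_alternate_cat s1 s2 s3 a b :
  b \notin s2 -> ~~ alternate (s1 ++ a :: s2 ++ a :: s3) a b.
Proof.
move=> b_s2; rewrite alternateE filter_cat /= eqxx filter_cat /= eqxx sorted_cat_cons.
have : all (pred1 a) [seq z <- s2 | (z == a) || (z == b)].
  apply/allP => z; rewrite mem_filter => /andP[/orP[//|/eqP z_b] s2_z].
  by rewrite -z_b s2_z in b_s2.
case: (filter _ s2) => [|z t] /=; first by rewrite /neq_rel eqxx andbF.
by case/andP=> /eqP -> _; rewrite /neq_rel eqxx andbF.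
Qed.

Lemma sorted_neq_nseq a b k :
  a != b -> sorted neq_rel (flatten (nseq k [:: a; b])).
Proof.
move=> neq_ab; have path_b j : path neq_rel b (flatten (nseq j [:: a; b])).
  by elim: j => //= j ->; rewrite /neq_rel eq_sym neq_ab.
by case: k => //= k; rewrite path_b andbT.
Qed.

End Alternation.

Arguments neq_rel {T}.

Lemma alternate_map_in (T S : eqType) (g : T -> S) (s : seq T) a b :
  {in a :: b :: s &, injective g} ->
  alternate (map g s) (g a) (g b) = alternate s a b.
Proof.
move=> /inj_in_eq g_inj; rewrite !alternateE filter_map sorted_map.
set D := a :: b :: s.
have [Da Db] : a \in D /\ b \in D by rewrite !inE !eqxx orbT.
have sub_s : {subset s <= D} by move=> z s_z; rewrite !inE s_z !orbT.
rewrite (@eq_in_filter _ _ (fun z => (z == a) || (z == b))); last first.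
  by move=> z /sub_s Dz /=; rewrite !g_inj.
apply: (@eq_in_sorted _ [pred z | z \in D]).
  by move=> u v Du Dv; rewrite /= /neq_rel g_inj.
by apply/allP => z; rewrite mem_filter => /andP[_ /sub_s].
Qed.

Section CirculantWord.

Variables (m : nat) (es : seq nat).
Local Notation r := (size es).
Hypotheses (m_gt0 : 0 < m) (r_gt0 : 0 < r).
Hypothesis es_lt : forall s, s < r -> nth 0 es s < m.

(* Block b of cword (positions b * r, ..., b * r + r - 1) lists b + e mod m
   for the offsets e of es, in order. *)
Definition cword_at p := (p %/ r + nth 0 es (p %% r)) %% m.
Definition cword := mkseq cword_at (r * m).
Definition cword_pos v s := (v + (m - nth 0 es s)) %% m * r + s.
Definition cword_occ v := [seq cword_pos v s | s <- iota 0 r].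

Lemma cword_at_block b s : s < r -> cword_at (b * r + s) = (b + nth 0 es s) %% m.
Proof.
move=> lt_sr; rewrite /cword_at divnMDl // divn_small // addn0.
by rewrite modnMDl (modn_small lt_sr).
Qed.

Lemma cword_at_lt p : cword_at p < m.
Proof. exact: ltn_pmod. Qed.

Lemma cword_atD p c : cword_at (p + c * r) = (cword_at p + c) %% m.
Proof.
by rewrite /cword_at modnDml divnDMl // [p + _]addnC modnMDl addnAC.
Qed.

Lemma cword_at_period p : cword_at (p + m * r) = cword_at p.
Proof. by rewrite cword_atD modnDr modn_small ?cword_at_lt. Qed.

Lemma cword_shift c :
  c <= m -> map (fun z => (z + c) %% m) cword = rot (c * r) cword.
Proof.
move=> le_cm; set k := c * r.
have le_k : k <= r * m by rewrite /k mulnC leq_mul2l le_cm orbT.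
have iota_split : iota 0 (r * m) = iota 0 (r * m - k) ++ iota (r * m - k) k.
  by rewrite -{1}(subnK le_k) iotaD.
have iota_shift i j : iota i j = map (addn i) (iota 0 j) by rewrite -iotaDl addn0.
rewrite /cword /mkseq -map_rot /rot drop_iota take_iota (minn_idPl le_k) add0n.
rewrite iota_split !map_cat -!map_comp (iota_shift k) (iota_shift (r * m - k)) -!map_comp.
congr (_ ++ _); apply: eq_map => i /=.
  by rewrite [k + i]addnC /k cword_atD.
by rewrite -cword_atD -/k addnAC subnK // addnC mulnC cword_at_period.
Qed.

Lemma mem_cword_lt z : z \in cword -> z < m.
Proof. by move=> /mapP[p _ ->]; apply: cword_at_lt. Qed.

Lemma cword_at_pos v s : s < r -> v < m -> cword_at (cword_pos v s) = v.
Proof.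
move=> lt_sr lt_vm; have le_e := ltnW (es_lt lt_sr).
by rewrite cword_at_block // modnDml -addnA subnK // modnDr modn_small.
Qed.

Lemma cword_pos_at p : p < r * m -> cword_pos (cword_at p) (p %% r) = p.
Proof.
move=> lt_p; have lt_b : p %/ r < m by rewrite ltn_divLR // mulnC.
have le_e : nth 0 es (p %% r) <= m by apply/ltnW/es_lt/ltn_pmod.
by rewrite /cword_pos /cword_at modnDml -addnA subnKC // modnDr (modn_small lt_b) -divn_eq.
Qed.

Lemma cword_pos_lt v s : s < r -> cword_pos v s < r * m.
Proof.
move=> lt_sr; have := ltn_pmod (v + (m - nth 0 es s)) m_gt0.
rewrite /cword_pos; nia.
Qed.

Lemma mem_cword_occ k v :
  v < m -> (k \in cword_occ v) = (k < r * m) && (cword_at k == v).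
Proof.
move=> lt_vm; apply/mapP/andP => [[s] | [lt_k /eqP <-]].
  by rewrite mem_iota add0n => /andP[_ lt_sr] ->; rewrite cword_pos_lt // cword_at_pos.
by exists (k %% r); rewrite ?mem_iota ?ltn_pmod ?cword_pos_at.
Qed.

Lemma count_cword v : v < m -> count_mem v cword = r.
Proof.
move=> lt_vm.
have occ_uniq : uniq (cword_occ v).
  rewrite map_inj_in_uniq ?iota_uniq // => s1 s2.
  rewrite !mem_iota !add0n => /andP[_ lt1] /andP[_ lt2] /(congr1 (modn^~ r)).
  by rewrite /cword_pos !modnMDl !modn_small.
have : perm_eq [seq p <- iota 0 (r * m) | cword_at p == v] (cword_occ v).
  apply: uniq_perm; [exact/filter_uniq/iota_uniq | exact: occ_uniq | ].
  by move=> p; rewrite mem_filter mem_iota mem_cword_occ // add0n leq0n andbC.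
move/perm_size; rewrite size_filter size_map size_iota => <-.
by rewrite /cword /mkseq count_map.
Qed.

Lemma alternate_cword_shift a b c :
  a < m -> b < m -> a != b -> c <= m ->
  alternate cword ((a + c) %% m) ((b + c) %% m) = alternate cword a b.
Proof.
move=> lt_a lt_b neq_ab le_cm.
have shift_inj : {in a :: b :: cword &, injective (fun z => (z + c) %% m)}.
  have lt_D z : z \in a :: b :: cword -> z < m.
    by rewrite !inE => /or3P[/eqP->|/eqP->|/mem_cword_lt].
  move=> z1 z2 /lt_D lt1 /lt_D lt2 /eqP.
  by rewrite eqn_modDr !modn_small // => /eqP.
rewrite -(alternate_map_in shift_inj) /= cword_shift // alternate_rot //.
  by rewrite eqn_modDr !modn_small.
by rewrite !count_cword ?ltn_pmod.
Qed.

Lemma alternate_cword_shift0 a b :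
  a < m -> b < m -> a != b ->
  alternate cword a b = alternate cword 0 ((b + (m - a)) %% m).
Proof.
move=> lt_a lt_b neq_ab.
by rewrite -(alternate_cword_shift _ _ _ (leq_subr a m)) // subnKC ?modnn // ltnW.
Qed.

Lemma alternate_cword_opp d :
  0 < d < m -> alternate cword 0 (m - d) = alternate cword 0 d.
Proof.
case/andP=> d_gt0 lt_dm.
rewrite alternateC alternate_cword_shift0 ?add0n ?subKn ?modn_small ?(ltnW lt_dm) //; lia.
Qed.

(* As a and b occur r times each, the 2r positions ps are all their
   occurrences. *)
Lemma alternate_cword_of_positions a b ps :
  a < m -> b < m -> a != b ->
  sorted ltn ps -> all (fun p => p < r * m) ps ->
  map cword_at ps = flatten (nseq r [:: a; b]) ->
  alternate cword a b.
Proof.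
move=> lt_a lt_b neq_ab sorted_ps lt_ps letters_ps.
rewrite alternateE /cword /mkseq filter_map.
set P := preim _ _; set F := filter P _.
have sub_ps : {subset ps <= F}.
  move=> p ps_p; rewrite mem_filter mem_iota add0n leq0n (allP lt_ps _ ps_p) !andbT.
  have : cword_at p \in flatten (nseq r [:: a; b]) by rewrite -letters_ps map_f.
  by case/flattenP=> _ /nseqP[-> _]; rewrite !inE.
have size_F : size F = size ps.
  have disj_ab : count (predI (pred1 a) (pred1 b)) cword = 0.
    rewrite (eq_count (a2 := pred0)) ?count_pred0 // => z /=.
    by case: eqP => // ->; apply/negbTE.
  rewrite -(size_map cword_at ps) letters_ps size_flatten /shape map_nseq sumn_nseq /=.
  rewrite size_filter -count_map -[map cword_at _]/cword.
  rewrite mul2n -addnn -{1}(count_cword lt_a) -(count_cword lt_b).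
  by rewrite -count_predUI disj_ab addn0.
have [_ ps_F] := uniq_min_size (sorted_uniq ltn_trans ltnn sorted_ps) sub_ps (eq_leq size_F).
suff -> : F = ps by rewrite letters_ps sorted_neq_nseq.
apply: (irr_sorted_eq ltn_trans ltnn) => //.
exact: (sorted_filter ltn_trans P (iota_ltn_sorted 0 (r * m))).
Qed.

Lemma alternate_cword_of_blocks a b (L : seq (nat * nat)) :
  a < m -> b < m -> a != b ->
  all (fun p => (p.1 < m) && (p.2 < r)) L ->
  sorted ltn [seq p.1 * r + p.2 | p <- L] ->
  [seq (p.1 + nth 0 es p.2) %% m | p <- L] = flatten (nseq r [:: a; b]) ->
  alternate cword a b.
Proof.
move=> lt_a lt_b neq_ab L_lt sorted_L letters_L.
apply: (alternate_cword_of_positions lt_a lt_b neq_ab sorted_L).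
  by apply/allP => _ /mapP[p /(allP L_lt) /andP[lt1 lt2] ->]; nia.
rewrite -letters_L -map_comp; apply/eq_in_map => p /(allP L_lt) /andP[_ lt_p2].
exact: cword_at_block.
Qed.

(* The occurrences of 0 at positions 0 and r + 1 enclose only the letters
   es_1, ..., es_(r-1) and 1. *)
Lemma cword_not_alternate d :
  1 < m -> nth 0 es 0 = 0 -> nth 0 es 1 = m.-1 ->
  d != 1 -> d \notin es -> ~~ alternate cword 0 d.
Proof.
move=> m_gt1 es0 es1 d_neq1 d_es.
have at_block0 p : p < r -> cword_at p = nth 0 es p.
  by move=> lt_pr; rewrite -[p]/(0 * r + p) cword_at_block // modn_small ?es_lt.
have r_gt1 : 1 < r.
  by rewrite ltnNge; apply/negP => le_r1; move: es1; rewrite nth_default //; lia.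
have le_r2 : r.+2 <= r * m by nia.
have -> : cword = [::] ++ 0 :: [seq cword_at p | p <- iota 1 r] ++
                  0 :: [seq cword_at p | p <- iota r.+2 (r * m - r.+2)].
  have at0 : cword_at 0 = 0 by rewrite at_block0.
  have at_r1 : cword_at r.+1 = 0.
    by rewrite -[r.+1]addn1 -[r]mul1n cword_at_block // es1 add1n prednK ?modnn // ltnW.
  rewrite /cword /mkseq.
  have -> : iota 0 (r * m) = 0 :: iota 1 r ++ r.+1 :: iota r.+2 (r * m - r.+2).
    have split_rm : 1 + (r + (1 + (r * m - r.+2))) = r * m by lia.
    by rewrite -{1}split_rm !iotaD add0n add1n addn1.
  by rewrite /= map_cat /= at0 at_r1.
apply: not_alternate_cat; apply/mapP => [[p]].
rewrite mem_iota => /andP[p_gt0 lt_p] d_eq.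
have [lt_pr | le_rp] := ltnP p r; first by rewrite d_eq at_block0 // mem_nth in d_es.
have p_r : p = r by lia.
move: d_neq1; rewrite d_eq p_r -[r]mul1n -[1 * r]addn0 cword_at_block //.
by rewrite es0 addn0 (modn_small m_gt1) eqxx.
Qed.

End CirculantWord.

Definition c2n_offsets n x := [:: 0; (2 * n).-1; 2 * n - x; n; x].

Definition c2n_jump n x d := [|| d == 1, d == x, d == n, d == 2 * n - x | d == 2 * n - 1].

Lemma C2n_x1nE n x (i j : 'I_(2 * n)) :
  x <= n -> i != j -> C2n_x1n n x i j = c2n_jump n x ((j + (2 * n - i)) %% (2 * n)).
Proof.
move=> le_xn neq_ij.
have lt_i := ltn_ord i; have lt_j := ltn_ord j.
rewrite /C2n_x1n /circulant /circ_dist neq_ij modn_diff // unfold_in /c2n_jump /=.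
by case: (leqP i j); lia.
Qed.

Section C2nWord.

Variables n x : nat.
Hypotheses (x_gt1 : 1 < x) (x_lt_n : x < n) (n_lt_2x : n < 2 * x) (x3_le_n2 : 3 * x <= 2 * n).

Local Notation es := (c2n_offsets n x).
Local Notation w := (cword (2 * n) es).

Let n2_gt0 : 0 < 2 * n. Proof. lia. Qed.

Let es_gt0 : 0 < size es. Proof. by []. Qed.

Let es_lt s : s < size es -> nth 0 es s < 2 * n.
Proof. by case: s => [|[|[|[|[|]]]]] //= _; lia. Qed.

(* Each pair (b, s) is the occurrence of 0 or d in slot s of block b; listed in
   increasing position, they read 0, d, 0, d, ... *)
Lemma alternate_c2n_word_1 : alternate w 0 1.
Proof.
apply: (@alternate_cword_of_blocks _ _ n2_gt0 es_gt0 es_lt 0 1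
  [:: (0, 0); (1, 0); (1, 1); (2, 1); (x, 2); (x.+1, 2);
      (n, 3); (n.+1, 3); (2 * n - x, 4); ((2 * n - x).+1, 4)]); try by rewrite /=; lia.
by rewrite /=; repeat (congr cons; first by apply: modn_wrap; lia).
Qed.

Lemma alternate_c2n_word_x : alternate w 0 x.
Proof.
apply: (@alternate_cword_of_blocks _ _ n2_gt0 es_gt0 es_lt 0 x
  [:: (0, 0); (0, 4); (1, 1); (x, 0); (x, 2); (x.+1, 1);
      (n, 3); (2 * x, 2); (2 * n - x, 4); (n + x, 3)]); try by rewrite /=; lia.
by rewrite /=; repeat (congr cons; first by apply: modn_wrap; lia).
Qed.

Lemma alternate_c2n_word_n : alternate w 0 n.
Proof.
apply: (@alternate_cword_of_blocks _ _ n2_gt0 es_gt0 es_lt 0 n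
  [:: (0, 0); (0, 3); (1, 1); (n - x, 4); (x, 2); (n, 0);
      (n, 3); (n.+1, 1); (2 * n - x, 4); (n + x, 2)]); try by rewrite /=; lia.
by rewrite /=; repeat (congr cons; first by apply: modn_wrap; lia).
Qed.

Lemma alternate_c2n_word0 d :
  0 < d < 2 * n ->
  alternate w 0 d = c2n_jump n x d.
Proof.
move=> d_range.
have alt_jump e : e \in [:: 1; x; n] -> alternate w 0 e.
  by rewrite !inE => /or3P[] /eqP ->;
    [exact: alternate_c2n_word_1 | exact: alternate_c2n_word_x | exact: alternate_c2n_word_n].
rewrite /c2n_jump; apply/idP/idP => [|adj_d].
  apply: contraLR => nonadj_d.
  by apply: (cword_not_alternate n2_gt0 es_gt0 es_lt) => //=; rewrite ?inE; lia.
have [jump_d | not_jump_d] := boolP (d \in [:: 1; x; n]); first exact: alt_jump.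
have -> : d = 2 * n - (2 * n - d) by lia.
rewrite (alternate_cword_opp n2_gt0 es_gt0 es_lt); last lia.
by apply: alt_jump; move: not_jump_d; rewrite !inE; lia.
Qed.

Lemma count_c2n_word v : v < 2 * n -> count_mem v w = 5.
Proof. exact: count_cword. Qed.

Lemma c2n_word_lt : all (fun z => z < 2 * n) w.
Proof. by apply/allP => z; apply: mem_cword_lt. Qed.

Lemma alternate_c2n_word i j :
  i < 2 * n -> j < 2 * n -> i != j ->
  alternate w i j = c2n_jump n x ((j + (2 * n - i)) %% (2 * n)).
Proof.
move=> lt_i lt_j neq_ij.
rewrite (alternate_cword_shift0 n2_gt0 es_gt0 es_lt) // alternate_c2n_word0 //.
by rewrite modn_diff //; case: (leqP i j); lia.
Qed.

End C2nWord.

Lemma k_representable_of_nat_word m (adj : rel 'I_m) (w : seq nat) k :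
  all (fun z => z < m) w -> (forall v, v < m -> count_mem v w = k) -> 0 < k ->
  (forall i j : 'I_m, i != j -> adj i j = alternate w i j) ->
  k_representable adj k.
Proof.
move=> lt_w count_w k_gt0 adj_w.
have val_wo : map val (pmap insub w : seq 'I_m) = w.
  rewrite (pmap_filter (@insubK _ _ _)).
  by apply/all_filterP; rewrite (eq_all (@isSome_insub _ _ _)).
have count_wo (v : 'I_m) : count_mem v (pmap insub w) = k.
  rewrite -(count_w _ (ltn_ord v)) -{2}val_wo count_map.
  by apply: eq_count => z; rewrite /= val_eqE.
exists (pmap insub w); split; first by apply/forallP => v; rewrite count_wo.
split=> [v | i j neq_ij]; first by rewrite -has_pred1 has_count count_wo.
by rewrite adj_w // -{1}val_wo alternate_map_in //; apply: in2W val_inj.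
Qed.

Theorem theorem27 (n x : nat) :
  1 < x -> x < n ->
  n < 2 * x -> 3 * x <= 2 * n ->
  word_representable (C2n_x1n n x) /\
  exists k, 0 < k <= 5 /\ k_representable (C2n_x1n n x) k.
Proof.
move=> x_gt1 x_lt_n n_lt_2x x3_le_n2.
have rep5 : k_representable (C2n_x1n n x) 5.
  apply: (k_representable_of_nat_word (c2n_word_lt x_gt1 x_lt_n n_lt_2x x3_le_n2)) => //.
    exact: count_c2n_word.
  move=> i j neq_ij.
  by rewrite C2n_x1nE ?(ltnW x_lt_n) // alternate_c2n_word ?ltn_ord.
split; last by exists 5.
by case: rep5 => w [_ rep]; exists w.
Qed.
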